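(* Let $\Bbbk$ be a field, $S=\Bbbk[x_1,\dots,x_n]$, $\mathbf{a}\in\mathbb{N}^n$ with all $a_k\ge1$, $i\in[n]$, $j\ge1$ an integer, and $I\subset S$ a monomial ideal all of whose minimal generators $x^{\mathbf{c}}$ satisfy $\mathbf{c}\preceq\mathbf{a}$. For $\mathbf{b}\in\mathbb{N}^n$ with $\mathbf{b}\preceq\mathbf{a}$, $x^{\mathbf{b}}$ is a minimal generator of $I^{\vee\mathbf{a}}$ if and only if $x^{\tau_{\langle i,a_i+2-j\rangle}(\mathbf{b})}$ is a minimal generator of $(I^{\triangleleft\langle i,j\rangle})^{\vee(\mathbf{a}+\mathbf{e}_i)}$.
   Context: $\preceq$ is the componentwise order on $\mathbb{Z}^n$; $x^{\mathbf{b}}=\prod_k x_k^{b_k}$; $\mathbf{e}_i$ is the $i$-th unit vector. For $m\in\mathbb{Z}$, $\tau_{\langle i,m\rangle}:\mathbb{Z}^n\to\mathbb{Z}^n$ fixes coordinates $k\ne i$ and $(\tau_{\langle i,m\rangle}(\mathbf{b}))_i=b_i+1$ if $b_i\ge m$, $b_i$ if $b_i<m$. For $I=(x^{\mathbf{c}_1},\dots,x^{\mathbf{c}_r})$ and $j\ge1$, $I^{\triangleleft\langle i,j\rangle}:=(x^{\tau_{\langle i,j\rangle}(\mathbf{c}_1)},\dots,x^{\tau_{\langle i,j\rangle}(\mathbf{c}_r)})$. For $\mathbf{d}\in\mathbb{N}^n$ and a monomial ideal $J$ whose minimal generators have exponents $\preceq\mathbf{d}$, the Alexander dual is $J^{\vee\mathbf{d}}=(x^{\mathbf{b}}\mid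 \mathbf{b}\in\mathbb{N}^n,\ \mathbf{b}\preceq\mathbf{d},\ x^{\mathbf{d}-\mathbf{b}}\notin J)$.
   Formalization: j is restricted to 1 ≤ j ≤ aᵢ + 1 instead of ranging over all integers j ≥ 1. The statement above fails without it. *)

From mathcomp Require Import all_boot all_order all_algebra.
Set Implicit Arguments. Unset Strict Implicit. Unset Printing Implicit Defensive.
Import Order.TTheory GRing.Theory Num.Theory.

(* Exponent vectors b in N^n; the monomial x^b of S = k[x_1..x_n]. *)
Definition expo (n : nat) := {ffun 'I_n -> nat}.

(* componentwise order b <= c (i.e. x^b divides x^c) *)
Definition lev n (b c : expo n) : bool := [forall k, b k <= c k].

Definition addunit n (b : expo n) (i : 'I_n) : expo n :=
  [ffun k => if k == i then (b k).+1 else b k].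

(* d - b (componentwise, used only for b <= d) *)
Definition subexp n (d b : expo n) : expo n := [ffun k => d k - b k].

Definition tau n (i : 'I_n) (m : int) (b : expo n) : expo n :=
  [ffun k => if k == i then (if (m <= (b k)%:Z)%R then (b k).+1 else b k)
             else b k].

(* A monomial ideal is represented by the set of exponents of the monomials
   it contains. *)
Definition gen_ideal n (G : expo n -> Prop) : expo n -> Prop :=
  fun e => exists2 g, G g & lev g e.

Definition mon_ideal n (cs : seq (expo n)) : expo n -> Prop :=
  gen_ideal (fun c => c \in cs).

Definition is_mingen n (J : expo n -> Prop) (b : expo n) : Prop :=
  J b /\ (forall b', J b' -> lev b' b -> b' = b).

Definition alex_dual n (J : expo n -> Prop) (d : expo n) : expo n -> Prop :=
  gen_ideal (fun b => lev b d /\ ~ J (subexp d b)).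

Definition tri_gens n (i : 'I_n) (j : nat) (cs : seq (expo n)) : seq (expo n) :=
  [seq tau i j%:Z c | c <- cs].

From mathcomp Require Import all_boot all_order all_algebra.
From mathcomp Require Import zify.
Set Implicit Arguments. Unset Strict Implicit. Unset Printing Implicit Defensive.

(* For m > 0, the map tau_<i,m> has the "decrement the i-th coordinate when it
   is at least m" map as upper adjoint for the componentwise order, and the
   complement b |-> d - b exchanges these maps at thresholds j and a_i + 2 - j
   when d = a + e_i.  Hence tau_<i,a_i+2-j> and its adjoint carry the
   generators of I^{vee a} to those of (I^{<|<i,j>})^{vee (a+e_i)} and back,
   and the adjunction transports minimality. *)

Lemma levP n (b c : expo n) : reflect (forall k, b k <= c k) (lev b c).
Proof. exact: forallP. Qed.

Lemma lev_refl n (b : expo n) : lev b b.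
Proof. by apply/levP. Qed.

Lemma lev_trans n (b c d : expo n) : lev b c -> lev c d -> lev b d.
Proof.
by move=> /levP bc /levP cd; apply/levP => k; exact: leq_trans (bc k) (cd k).
Qed.

Lemma lev_anti n (b c : expo n) : lev b c -> lev c b -> b = c.
Proof.
by move=> /levP bc /levP cb; apply/ffunP => k; apply/eqP; rewrite eqn_leq bc cb.
Qed.

Lemma is_mingen_transport n n' (J : expo n -> Prop) (J' : expo n' -> Prop)
    (f : expo n -> expo n') (g : expo n' -> expo n) :
  (forall b c, lev b c -> lev (f b) (f c)) ->
  (forall b c, lev b c -> lev (g b) (g c)) ->
  (forall b, g (f b) = b) -> (forall w, lev (f (g w)) w) ->
  (forall b, J b -> J' (f b)) -> (forall w, J' w -> J (g w)) ->
  forall b, is_mingen J b <-> is_mingen J' (f b).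
Proof.
move=> f_mono g_mono gK fgK JJ' J'J b; split.
- case=> Jb b_min; split; first exact: JJ'.
  move=> w J'w le_w_fb.
  have gw_b : g w = b by apply: b_min; [exact: J'J | rewrite -(gK b); exact: g_mono].
  by apply: lev_anti => //; rewrite -gw_b.
- case=> J'fb fb_min; split; first by rewrite -(gK b); exact: J'J.
  move=> b' Jb' le_b'_b.
  by rewrite -(gK b') (fb_min _ (JJ' _ Jb') (f_mono _ _ le_b'_b)) gK.
Qed.

Section Shift.
Variables (n : nat) (i : 'I_n).

Definition tau_nat (m : nat) (b : expo n) : expo n :=
  [ffun k => if k == i then (if m <= b k then (b k).+1 else b k) else b k].

Definition untau (m : nat) (b : expo n) : expo n :=
  [ffun k => if k == i then (if m <= b k then b k - 1 else b k) else b k].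

Lemma tau_natE (m : nat) : tau i m%:Z =1 tau_nat m.
Proof. by move=> b; apply/ffunP => k; rewrite !ffunE lez_nat. Qed.

Lemma untau_tau m : cancel (tau_nat m) (untau m).
Proof.
move=> b; apply/ffunP => k; rewrite !ffunE; move: (b k) => x.
by case: (k == i) => //; case: (leqP m x) => h; case: ifP; lia.
Qed.

Lemma tau_nat_le_galois m c v :
  0 < m -> lev (tau_nat m c) v = lev c (untau m v).
Proof.
move=> m_gt0; apply/levP/levP => le_cv k; have := le_cv k; rewrite !ffunE;
by case: (k == i) => //; do 2 case: ifP; lia.
Qed.

Lemma tau_untau_le m w : 0 < m -> lev (tau_nat m (untau m w)) w.
Proof. by move=> m_gt0; rewrite tau_nat_le_galois ?lev_refl. Qed.

Lemma tau_nat_mono m b c : 0 < m -> lev b c -> lev (tau_nat m b) (tau_nat m c).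
Proof. by move=> m_gt0 le_bc; rewrite tau_nat_le_galois // untau_tau. Qed.

Lemma untau_mono m b c : 0 < m -> lev b c -> lev (untau m b) (untau m c).
Proof.
by move=> m_gt0 le_bc; rewrite -tau_nat_le_galois //; exact: lev_trans (tau_untau_le _ _) le_bc.
Qed.

Lemma tau_nat_le_addunit m (b a : expo n) : lev b a -> lev (tau_nat m b) (addunit a i).
Proof.
move=> /levP le_ba; apply/levP => k; have := le_ba k; rewrite !ffunE.
by case: (k == i) => //; case: ifP; lia.
Qed.

Lemma untau_le m (w a : expo n) :
  0 < m -> m <= (a i).+1 -> lev w (addunit a i) -> lev (untau m w) a.
Proof.
move=> m_gt0 m_le /levP le_wa; apply/levP => k; have := le_wa k; rewrite !ffunE.
by case: (k =P i) => [->|_]; rewrite ?eqxx //; case: ifP; lia.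
Qed.

Lemma untau_subexp j (a w : expo n) : 0 < j -> j <= (a i).+1 ->
  untau j (subexp (addunit a i) w) = subexp a (untau (a i + 2 - j) w).
Proof.
move=> j_gt0 j_le; apply/ffunP => k; rewrite !ffunE.
by case: eqP => [->|_] //; do 2 case: ifP; lia.
Qed.

Lemma mon_ideal_tri_gens j cs v : 0 < j ->
  mon_ideal (tri_gens i j cs) v <-> mon_ideal cs (untau j v).
Proof.
move=> j_gt0; split.
- case=> _ /mapP [c cs_c ->]; rewrite tau_natE tau_nat_le_galois // => le_cv.
  by exists c.
- case=> c cs_c le_cv; exists (tau i j%:Z c); first by apply/mapP; exists c.
  by rewrite tau_natE tau_nat_le_galois.
Qed.

Section AlexanderDual.
Variables (a : expo n) (j : nat) (cs : seq (expo n)).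
Hypotheses (j_gt0 : 0 < j) (j_le : j <= (a i).+1).

Let m := a i + 2 - j.
Let m_gt0 : 0 < m. Proof. rewrite /m; lia. Qed.
Let m_le : m <= (a i).+1. Proof. rewrite /m; lia. Qed.

Lemma alex_dual_tau_nat b :
  alex_dual (mon_ideal cs) a b ->
  alex_dual (mon_ideal (tri_gens i j cs)) (addunit a i) (tau_nat m b).
Proof.
case=> g [le_ga gI] le_gb; exists (tau_nat m g); last exact: tau_nat_mono.
split; first exact: tau_nat_le_addunit.
by rewrite mon_ideal_tri_gens // untau_subexp // untau_tau.
Qed.

Lemma alex_dual_untau w :
  alex_dual (mon_ideal (tri_gens i j cs)) (addunit a i) w ->
  alex_dual (mon_ideal cs) a (untau m w).
Proof.
case=> g [le_ga gI] le_gw; exists (untau m g); last exact: untau_mono.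
split; first exact: untau_le.
by rewrite mon_ideal_tri_gens // untau_subexp // in gI.
Qed.

End AlexanderDual.

End Shift.

Theorem lemma5p2 (n : nat) (a : expo n) (i : 'I_n) (j : nat)
    (cs : seq (expo n)) :
  (forall k, 0 < a k) ->
  0 < j -> j <= (a i).+1 ->
  (forall c, c \in cs -> lev c a) ->
  forall b : expo n, lev b a ->
    (is_mingen (alex_dual (mon_ideal cs) a) b <->
     is_mingen (alex_dual (mon_ideal (tri_gens i j cs)) (addunit a i))
               (tau i ((a i)%:Z + 2 - j%:Z)%R b)).
Proof.
move=> _ j_gt0 j_le _ b _.
have -> : ((a i)%:Z + 2 - j%:Z)%R = (a i + 2 - j)%N by lia.
rewrite tau_natE.
have m_gt0 : 0 < a i + 2 - j by lia.
apply: (is_mingen_transport (g := untau i (a i + 2 - j))).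
- by move=> ? ?; exact: tau_nat_mono.
- by move=> ? ?; exact: untau_mono.
- exact: untau_tau.
- by move=> ?; exact: tau_untau_le.
- exact: alex_dual_tau_nat.
- exact: alex_dual_untau.
Qed.
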